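(* In the HTLC game described in the context, for any $k\in[1,T-1]$, the unique subgame perfect equilibrium in $G^{H}(k,\mathrm{red})$ is that every miner includes an unrelated transaction, and the utility of miner $i$ when doing so is $\lambda_i\big((T-k)f+f^{h}_{\mathcal{B}}\big)$.
   Context: Blockchain model: $n$ miners; miner $i$ has mining power $\lambda_i>0$, $\sum_i\lambda_i=1$, $\lambda_{\min}=\min_i\lambda_i$. Each round exactly one miner is chosen, miner $i$ with probability $\lambda_i$, and creates a block containing one transaction of her choice, receiving its fee. An unrelated transaction offering base fee $f$ is always available. A contract can be redeemed at most once. Miners are rational, non-myopic, with perfect information, maximizing expected tokens. HTLC: a contract holding $v^{\mathrm{dep}}$ tokens initiated in block $b_j$, with digest $dig_a=H(pre_a)$ and timeout $T$, redeemable via htlc-A (signature of $\mathcal{A}$ and $pre_a$; any block) or htlc-B (signature of $\mathcal{B}$; only at least $T$ blocks after initiation). The HTLC game has $T$ rounds creating $b_{j+1},\dots,b_{j+T}$. $\mathcal{A}$ publishes $tx^{h}_{\mathcal{A}}$ (redeems via htlc-A, fee $f^{h}_{\mathcal{A}}$, $f<f^{h}_{\mathcal{A}}<v^{\mathrm{dep}}$) in the first round, and $\mathcal{B}$ publishes $tx^{h}_{\mathcal{B}}$ (redeems via htlc-B, fee $f^{h}_{\mathcal{B}}<v^{\mathrm{dep}}$) with $f^{h}_{\mathcal{B}}>\frac{f^{h}_{\mathcal{A}}-f}{\lambda_{\min}}+f$. A miner can include an unrelated transaction (reward $f$) in any round; $tx^{h}_{\mathcal{A}}$ (reward $f^{h}_{\mathcal{A}}$)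 in any round while the HTLC is unredeemed; $tx^{h}_{\mathcal{B}}$ (reward $f^{h}_{\mathcal{B}}$) only in round $T$ while the HTLC is unredeemed. $G^{H}(k,s)$ denotes the subgame just before round $k\in[1,T]$ (with $T-k+1$ blocks remaining) with the HTLC redeemable ($\mathrm{red}$) or already redeemed ($\mathrm{irred}$). A miner's utility in a subgame is the expected tokens she accumulates within it. *)

From mathcomp Require Import all_boot all_order all_algebra.
Set Implicit Arguments. Unset Strict Implicit. Unset Printing Implicit Defensive.
Import Order.TTheory GRing.Theory Num.Theory.
Local Open Scope ring_scope.

(* Rounds are numbered k, k+1, ..., T (absolute round
   numbers; round T is the last one, creating block b_{j+T}).
   The state is a boolean: true = red (HTLC redeemable), false = irred. *)

Inductive action := Unrel | TxA | TxB.

Definition is_unrel (a : action) : bool := if a is Unrel then true else false.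

Definition next_state (s : bool) (a : action) : bool := s && is_unrel a.

Definition feasible (T r : nat) (s : bool) (a : action) : bool :=
  match a with
  | Unrel => true
  | TxA => s
  | TxB => s && (r == T)
  end.

Definition fee (R : numDomainType) (f fA fB : R) (a : action) : R :=
  match a with Unrel => f | TxA => fA | TxB => fB end.

(* A history inside the subgame: the sequence of (chosen miner, action) of the
   rounds already played in the subgame (perfect information). *)
Definition hist (n : nat) := seq ('I_n * action).

Definition profile (n : nat) := 'I_n -> hist n -> action.

Fixpoint valid_from (n : nat) (T r : nat) (s : bool) (h : hist n) : bool :=
  match h with
  | [::] => true
  | (j, a) :: h' => feasible T r s a && valid_from T r.+1 (next_state s a) h'
  end.

Definition state_after (n : nat) (s : bool) (h : hist n) : bool :=
  foldl (fun st p => next_state st p.2) s h.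

Definition node (n : nat) (T k : nat) (s : bool) (h : hist n) : bool :=
  valid_from T k s h && (k + size h <= T)%N.

(* expected tokens accumulated by miner i in the m remaining rounds, starting
   in round r with state s after history h, under profile sigma *)
Fixpoint value (R : numDomainType) (n : nat) (lam : 'I_n -> R) (f fA fB : R)
  (sigma : profile n) (i : 'I_n) (m r : nat) (s : bool) (h : hist n) : R :=
  match m with
  | 0 => 0
  | m'.+1 => \sum_(j < n) lam j *
      ((if j == i then fee f fA fB (sigma j h) else 0) +
       value lam f fA fB sigma i m' r.+1 (next_state s (sigma j h))
             (rcons h (j, sigma j h)))
  end.

Definition util (R : numDomainType) (n : nat) (lam : 'I_n -> R) (f fA fB : R)
  (T k : nat) (s : bool) (sigma : profile n) (i : 'I_n) (h : hist n) : R :=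
  value lam f fA fB sigma i (T.+1 - (k + size h)) (k + size h)
        (state_after s h) h.

Definition feasible_strategy (n : nat) (T k : nat) (s : bool)
  (tau : hist n -> action) : Prop :=
  forall h : hist n, node T k s h ->
    feasible T (k + size h) (state_after s h) (tau h).

Definition upd (n : nat) (sigma : profile n) (i : 'I_n) (tau : hist n -> action)
  : profile n := fun j => if j == i then tau else sigma j.

Definition SPE (R : numDomainType) (n : nat) (lam : 'I_n -> R) (f fA fB : R)
  (T k : nat) (s : bool) (sigma : profile n) : Prop :=
  (forall j, feasible_strategy T k s (sigma j)) /\
  forall h : hist n, node T k s h ->
  forall (i : 'I_n) (tau : hist n -> action), feasible_strategy T k s tau ->
    util lam f fA fB T k s (upd sigma i tau) i h
      <= util lam f fA fB T k s sigma i h.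

From HB Require Import structures.
From mathcomp Require Import all_boot all_order all_algebra.
From mathcomp Require Import lra zify.
Set Implicit Arguments. Unset Strict Implicit. Unset Printing Implicit Defensive.
Import Order.TTheory GRing.Theory Num.Theory.
Local Open Scope ring_scope.

(* Backward induction on the number m of remaining rounds.  While the HTLC is
   redeemable and m > 0 rounds follow the current one, including tx_A earns
   fA - f more now but forfeits the expected lam_i (fB - f) extra of the last
   round; the bound on fB makes this loss larger than the gain for every
   miner.  In the last round tx_B is the best feasible transaction.  Both
   comparisons are strict, so at every node each miner has a unique best
   reply to equilibrium continuation play, which forces any equilibrium to
   coincide with the profile "unrelated transactions, then tx_B".  Under it
   miner i expects lam_i f in each of the T - k rounds before the last and
   lam_i fB in the last one. *)

Definition action_eqb (a b : action) : bool :=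
  match a, b with
  | Unrel, Unrel | TxA, TxA | TxB, TxB => true
  | _, _ => false
  end.

Lemma action_eqP : Equality.axiom action_eqb.
Proof. by do 2!case; constructor. Qed.

HB.instance Definition _ := hasDecEq.Build action action_eqP.

Definition spe_action (T r : nat) (s : bool) : action :=
  if s && (r == T) then TxB else Unrel.

Definition spe_profile (n T k : nat) : profile n :=
  fun _ h => spe_action T (k + size h) (state_after true h).

Lemma feasible_spe_action T r s : feasible T r s (spe_action T r s).
Proof. by rewrite /spe_action; case: s => //=; case: eqP => //= ->. Qed.

Lemma state_after_rcons n s (h : hist n) p :
  state_after s (rcons h p) = next_state (state_after s h) p.2.
Proof. exact: foldl_rcons. Qed.

Lemma valid_from_rcons n T r s (h : hist n) p :
  valid_from T r s (rcons h p) =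
  valid_from T r s h && feasible T (r + size h) (state_after s h) p.2.
Proof.
elim: h r s => [|[j a] h IH] r s /=; first by case: p => ? ? /=; rewrite addn0 andbT.
by rewrite IH addSnnS andbA.
Qed.

Lemma eq_value (R : numDomainType) n (lam : 'I_n -> R) f fA fB
    (rho rho' : profile n) i m r s (h : hist n) :
  (forall j (h' : hist n), (size h <= size h')%N -> rho j h' = rho' j h') ->
  value lam f fA fB rho i m r s h = value lam f fA fB rho' i m r s h.
Proof.
elim: m r s h => [//|m IH] r s h eq_rho /=.
apply: eq_bigr => j _; rewrite eq_rho //; congr (_ * (_ + _)).
by apply: IH => j' h'; rewrite size_rcons => /ltnW; apply: eq_rho.
Qed.

Section EquilibriumPayoff.

Variables (R : realFieldType) (f fA fB : R).

Definition spe_value (li : R) (m : nat) (s : bool) : R :=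
  if s then (if m is m'.+1 then li * (m'%:R * f + fB) else 0)
  else li * (m%:R * f).

Definition stage_payoff (li : R) (m : nat) (s : bool) (a : action) : R :=
  fee f fA fB a + spe_value li m (next_state s a).

Lemma spe_value0 li s : spe_value li 0 s = 0.
Proof. by case: s; rewrite /spe_value ?mul0r ?mulr0. Qed.

Lemma spe_value_next_spe_action li T r m s : (r + m = T)%N ->
  spe_value li m (next_state s (spe_action T r s)) = spe_value li m s.
Proof.
move=> Hr; rewrite /spe_action; case: s => //=.
case: m Hr => [|m] Hr; first by rewrite !spe_value0.
by have -> : (r == T) = false by apply/eqP; lia.
Qed.

Lemma spe_valueS li T r m s : (r + m = T)%N ->
  spe_value li m.+1 s =
  li * stage_payoff li m s (spe_action T r s) + (1 - li) * spe_value li m s.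
Proof.
move=> Hr; rewrite /stage_payoff /spe_action; case: s => /=.
  case: m Hr => [|m] Hr.
    have -> : (r == T) = true by apply/eqP; lia.
    rewrite /spe_value /=; lra.
  have -> : (r == T) = false by apply/eqP; lia.
  rewrite /spe_value -addn1 natrD /=; lra.
rewrite /spe_value -addn1 natrD; lra.
Qed.

Hypotheses (f_lt_fA : f < fA) (fA_lt_fB : fA < fB).

Lemma stage_payoff_lt li T r m s b :
  fA - f < li * (fB - f) -> (r + m = T)%N -> feasible T r s b ->
  b != spe_action T r s ->
  stage_payoff li m s b < stage_payoff li m s (spe_action T r s).
Proof.
move=> gap Hr; rewrite /stage_payoff /spe_action.
case: s => /=; last by case: b.
case: m Hr => [|m] Hr.
  have -> : (r == T) = true by apply/eqP; lia.
  rewrite !spe_value0 !addr0; case: b => //= _ _.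
  exact: lt_trans f_lt_fA fA_lt_fB.
have rT : (r == T) = false by apply/eqP; lia.
rewrite rT; case: b => //=; rewrite ?rT // => _ _.
rewrite /spe_value -addn1 natrD /=; lra.
Qed.

Lemma stage_payoff_le li T r m s b :
  fA - f < li * (fB - f) -> (r + m = T)%N -> feasible T r s b ->
  stage_payoff li m s b <= stage_payoff li m s (spe_action T r s).
Proof.
move=> gap Hr Hb; have [-> // | neq] := eqVneq b (spe_action T r s).
exact/ltW/stage_payoff_lt.
Qed.

End EquilibriumPayoff.

Section Game.

Variables (R : realFieldType) (n : nat) (lam : 'I_n -> R) (f fA fB : R).
Variables (T k : nat).
Hypotheses (lam_gt0 : forall i, 0 < lam i) (lam_sum1 : \sum_(i < n) lam i = 1).
Hypotheses (f_lt_fA : f < fA) (fA_lt_fB : fA < fB).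
Hypothesis lam_gap : forall i, fA - f < lam i * (fB - f).

Local Notation round_at h := (k + size h)%N.
Local Notation state_at h := (state_after true h).

Lemma sum_lam_neq i : \sum_(j < n | j != i) lam j = 1 - lam i.
Proof. by rewrite -lam_sum1 [in RHS](bigD1 i) //= addrAC subrr add0r. Qed.

Definition rounds_left (m : nat) (h : hist n) : bool :=
  valid_from T k true h && (round_at h + m == T.+1)%N.

Lemma rounds_left_round m h : rounds_left m.+1 h -> (round_at h + m = T)%N.
Proof. by case/andP=> _ /eqP; lia. Qed.

Lemma rounds_left_node m h : rounds_left m.+1 h -> node T k true h.
Proof. by case/andP=> hv /eqP hm; rewrite /node hv /=; lia. Qed.

Lemma node_rounds_left h : node T k true h -> rounds_left (T.+1 - round_at h) h.
Proof. by case/andP=> hv hT; rewrite /rounds_left hv /=; apply/eqP; lia. Qed.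

Lemma rounds_left_rcons m h j a :
  rounds_left m.+1 h -> feasible T (round_at h) (state_at h) a ->
  rounds_left m (rcons h (j, a)).
Proof.
case/andP=> hv /eqP hm ha.
by rewrite /rounds_left valid_from_rcons hv ha size_rcons; apply/eqP; lia.
Qed.

Definition node_value (rho : profile n) (i : 'I_n) (m : nat) (h : hist n) : R :=
  value lam f fA fB rho i m (round_at h) (state_at h) h.

Lemma utilE rho i h :
  util lam f fA fB T k true rho i h = node_value rho i (T.+1 - round_at h) h.
Proof. by []. Qed.

Lemma node_valueS rho i m h :
  node_value rho i m.+1 h = \sum_(j < n) lam j *
    ((if j == i then fee f fA fB (rho j h) else 0) +
     node_value rho i m (rcons h (j, rho j h))).
Proof.
rewrite {1}/node_value /=; apply: eq_bigr => j _.
by rewrite /node_value state_after_rcons size_rcons addnS.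
Qed.

Definition spe_continuation (rho : profile n) (i : 'I_n) (m : nat) (h : hist n)
  : Prop :=
  forall j a, feasible T (round_at h) (state_at h) a ->
  node_value rho i m (rcons h (j, a)) =
  spe_value f fB (lam i) m (next_state (state_at h) a).

Lemma node_value_step rho i m h :
  rounds_left m.+1 h -> feasible T (round_at h) (state_at h) (rho i h) ->
  (forall j, j != i -> rho j h = spe_action T (round_at h) (state_at h)) ->
  spe_continuation rho i m h ->
  node_value rho i m.+1 h =
  lam i * stage_payoff f fA fB (lam i) m (state_at h) (rho i h) +
  (1 - lam i) * spe_value f fB (lam i) m (state_at h).
Proof.
move=> hm feas_i others children; have hr := rounds_left_round hm.
rewrite node_valueS (bigD1 i) //= eqxx children //.
under eq_bigr => j ji do rewrite (negbTE ji) add0r others // children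
  ?feasible_spe_action // spe_value_next_spe_action //.
by rewrite -big_distrl /= sum_lam_neq.
Qed.

Lemma node_value_step_le rho i m h :
  rounds_left m.+1 h -> feasible T (round_at h) (state_at h) (rho i h) ->
  (forall j, j != i -> rho j h = spe_action T (round_at h) (state_at h)) ->
  (forall j a, feasible T (round_at h) (state_at h) a ->
     node_value rho i m (rcons h (j, a)) <=
     spe_value f fB (lam i) m (next_state (state_at h) a)) ->
  node_value rho i m.+1 h <=
  lam i * stage_payoff f fA fB (lam i) m (state_at h) (rho i h) +
  (1 - lam i) * spe_value f fB (lam i) m (state_at h).
Proof.
move=> hm feas_i others children; have hr := rounds_left_round hm.
rewrite node_valueS (bigD1 i) //= eqxx -sum_lam_neq big_distrl /=.
apply: lerD; first by rewrite ler_pM2l // lerD2l children.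
apply: ler_sum => j ji; rewrite (negbTE ji) add0r ler_pM2l // others //.
by rewrite -(spe_value_next_spe_action _ _ _ _ hr) children ?feasible_spe_action.
Qed.

Lemma spe_profile_value i m h : rounds_left m h ->
  node_value (spe_profile T k) i m h = spe_value f fB (lam i) m (state_at h).
Proof.
elim: m h => [|m IH] h hm; first by rewrite spe_value0.
rewrite node_value_step ?feasible_spe_action //; last first.
  by move=> j a ha; rewrite IH ?state_after_rcons ?rounds_left_rcons.
by rewrite -(spe_valueS _ _ _ _ _ (rounds_left_round hm)).
Qed.

Lemma deviation_value_le i (rho : profile n) :
  (forall j, j != i -> rho j = spe_profile T k j) ->
  feasible_strategy T k true (rho i) ->
  forall m h, rounds_left m h ->
  node_value rho i m h <= spe_value f fB (lam i) m (state_at h).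
Proof.
move=> others feas_i; elim=> [|m IH] h hm; first by rewrite spe_value0.
have hr := rounds_left_round hm; have feas_ih := feas_i h (rounds_left_node hm).
apply: le_trans (node_value_step_le _ _ _ _) _ => //.
- by move=> j ji; rewrite others.
- by move=> j a ha; have := IH _ (rounds_left_rcons j hm ha); rewrite state_after_rcons.
by rewrite (spe_valueS f fA fB (lam i) _ hr) lerD2r ler_pM2l // stage_payoff_le.
Qed.

Lemma spe_profile_SPE : SPE lam f fA fB T k true (spe_profile T k).
Proof.
split=> [j h _ | h hnode i tau feas_tau]; first exact: feasible_spe_action.
rewrite !utilE spe_profile_value ?node_rounds_left //.
apply: deviation_value_le; rewrite ?node_rounds_left //.
- by move=> j ji; rewrite /upd (negbTE ji).
- by rewrite /upd eqxx.
Qed.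

Section Uniqueness.

Variable sigma : profile n.
Hypothesis sigma_SPE : SPE lam f fA fB T k true sigma.

Lemma SPE_stage_payoff_le m h j b :
  rounds_left m.+1 h -> feasible T (round_at h) (state_at h) b ->
  (forall i, spe_continuation sigma i m h) ->
  stage_payoff f fA fB (lam j) m (state_at h) b <=
  stage_payoff f fA fB (lam j) m (state_at h) (sigma j h).
Proof.
move=> hm hb children; case: sigma_SPE => feas_sigma best.
(* Playing b at every history of the length of h where it is feasible keeps
   tau a feasible strategy and leaves all play after h unchanged. *)
pose tau h' := if (size h' == size h) && feasible T (round_at h') (state_at h') b
               then b else sigma j h'.
have feas_tau : feasible_strategy T k true tau.
  by move=> h' h'node; rewrite /tau; case: ifP => [/andP[_ ->] | _] //; exact: feas_sigma.
have tau_h : upd sigma j tau j h = b by rewrite /upd eqxx /tau eqxx hb.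
have upd_neq j' : j' != j -> upd sigma j tau j' h = sigma j' h.
  by rewrite /upd => /negbTE ->.
have upd_later j' a : node_value (upd sigma j tau) j m (rcons h (j', a)) =
                      node_value sigma j m (rcons h (j', a)).
  apply: eq_value => j1 h1; rewrite size_rcons /upd /tau => h1_gt.
  by case: eqP => // ->; rewrite (_ : size h1 == size h = false) //; apply/eqP; lia.
have := best h (rounds_left_node hm) j tau feas_tau; rewrite !utilE.
have -> : (T.+1 - round_at h = m.+1)%N by have := rounds_left_round hm; lia.
rewrite !node_valueS (bigD1 j) // [X in _ <= X](bigD1 j) //= !eqxx tau_h.
rewrite !upd_later !children //; last exact: feas_sigma (rounds_left_node hm).
under eq_bigr => j' j'j do rewrite upd_neq // upd_later.
by rewrite lerD2r ler_pM2l.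
Qed.

Lemma SPE_action_step m h j : rounds_left m.+1 h ->
  (forall i, spe_continuation sigma i m h) ->
  sigma j h = spe_action T (round_at h) (state_at h).
Proof.
move=> hm children; apply/eqP; apply: contraT => not_spe.
have feas_j : feasible T (round_at h) (state_at h) (sigma j h).
  by case: sigma_SPE => feas_sigma _; exact/feas_sigma/rounds_left_node/hm.
have := stage_payoff_lt f_lt_fA fA_lt_fB (lam_gap j) (rounds_left_round hm) feas_j not_spe.
by rewrite ltNge SPE_stage_payoff_le ?feasible_spe_action.
Qed.

Lemma SPE_node_value m h i : rounds_left m h ->
  node_value sigma i m h = spe_value f fB (lam i) m (state_at h).
Proof.
elim: m h i => [|m IH] h i hm; first by rewrite spe_value0.
have children i' : spe_continuation sigma i' m h.
  by move=> j a ha; rewrite IH ?state_after_rcons ?rounds_left_rcons.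
rewrite node_value_step ?(SPE_action_step _ hm) ?feasible_spe_action //.
  by rewrite -(spe_valueS _ _ _ _ _ (rounds_left_round hm)).
by move=> j _; rewrite (SPE_action_step _ hm).
Qed.

Lemma SPE_action h j : node T k true h ->
  sigma j h = spe_action T (round_at h) (state_at h).
Proof.
move=> hnode; have := node_rounds_left hnode.
have -> : (T.+1 - round_at h = (T - round_at h).+1)%N by case/andP: hnode; lia.
move=> hm; apply: (SPE_action_step _ hm) => i j' a ha.
by rewrite SPE_node_value ?state_after_rcons // (rounds_left_rcons _ hm ha).
Qed.

Lemma SPE_util i h : node T k true h ->
  util lam f fA fB T k true sigma i h =
  spe_value f fB (lam i) (T.+1 - round_at h) (state_at h).
Proof. by move=> hnode; rewrite utilE SPE_node_value ?node_rounds_left. Qed.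

End Uniqueness.

End Game.

Lemma incentive_gap (R : realFieldType) (lmin li f fA fB : R) :
  0 < lmin -> lmin <= li -> f < fA -> (fA - f) / lmin + f < fB ->
  fA - f < li * (fB - f).
Proof.
move=> lmin_gt0 lmin_le f_lt_fA fB_gt.
have : (fA - f) / lmin < fB - f by lra.
rewrite ltr_pdivrMr // mulrC => gap_min.
apply: (lt_le_trans gap_min); rewrite ler_pM2r //.
have : 0 < (fA - f) / lmin by rewrite divr_gt0 // subr_gt0.
lra.
Qed.

Theorem lemma9 (R : realFieldType) (n : nat) (lam : 'I_n -> R)
  (lam_min f fA fB vdep : R) (T k : nat) :
  (forall i, 0 < lam i) -> \sum_(i < n) lam i = 1 ->
  (exists i, lam i = lam_min) -> (forall i, lam_min <= lam i) ->
  f < fA -> fA < vdep -> fB < vdep -> (fA - f) / lam_min + f < fB ->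
  (1 <= k)%N -> (k <= T - 1)%N ->
  (exists sigma : profile n, SPE lam f fA fB T k true sigma) /\
  (forall sigma1 sigma2 : profile n,
      SPE lam f fA fB T k true sigma1 -> SPE lam f fA fB T k true sigma2 ->
      forall h : hist n, node T k true h -> forall i, sigma1 i h = sigma2 i h) /\
  (forall sigma : profile n, SPE lam f fA fB T k true sigma ->
      (forall i, sigma i [::] = Unrel) /\
      (forall i, util lam f fA fB T k true sigma i [::]
                 = lam i * ((T - k)%:R * f + fB))).
Proof.
(* The bounds by vdep only make the fees payable; the equilibrium ignores them. *)
move=> lam_gt0 lam_sum1 [i0 lam_i0] lam_min_le f_lt_fA _ _ fB_gt k_gt0 k_lt_T.
have lam_min_gt0 : 0 < lam_min by rewrite -lam_i0.
have lam_min_le1 : lam_min <= 1.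
  by rewrite -lam_i0 -lam_sum1 (bigD1 i0) //= lerDl sumr_ge0 // => j _; exact: ltW.
have lam_gap i := incentive_gap lam_min_gt0 (lam_min_le i) f_lt_fA fB_gt.
have fA_lt_fB : fA < fB.
  by have := incentive_gap lam_min_gt0 lam_min_le1 f_lt_fA fB_gt; rewrite mul1r; lra.
have root : node T k true ([::] : hist n) by rewrite /node /= addn0; lia.
have act := SPE_action (T := T) (k := k) lam_gt0 lam_sum1 f_lt_fA fA_lt_fB lam_gap.
have payoff := SPE_util (T := T) (k := k) lam_gt0 lam_sum1 f_lt_fA fA_lt_fB lam_gap.
split; first by exists (spe_profile T k); exact: spe_profile_SPE.
split=> [s1 s2 S1 S2 h hnode i | sigma S].
  by rewrite (act _ S1 _ i hnode) (act _ S2 _ i hnode).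
split=> i.
  rewrite (act _ S _ i root) /spe_action /= addn0.
  by have -> : (k == T) = false by apply/eqP; lia.
rewrite (payoff _ S i _ root) /= addn0.
by have -> : (T.+1 - k = (T - k).+1)%N by lia.
Qed.
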